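(* Let $(M,\diamond,\bullet,\alpha_M)$ be a module over the multiplicative Hom-post-Lie algebra $(L,[\cdot,\cdot],\cdot,\alpha)$ and let $n$ be a non-negative integer. Define $\diamond^{n,0},\bullet^{n,0}:L\otimes M\to M$ by $x\diamond^{n,0}m=\alpha^n(x)\diamond m$ and $x\bullet^{n,0}m=\alpha^n(x)\bullet m$. Then $(M,\diamond^{n,0},\bullet^{n,0},\alpha_M)$ is a module over $L$.
   Context: All vector spaces are over a field $\mathbb{K}$ of characteristic $\neq 2$. A Hom-Lie algebra is $(L,[\cdot,\cdot],\alpha)$ with $[\cdot,\cdot]$ bilinear skew-symmetric, $\alpha$ linear, and $[\alpha(x),[y,z]]+[\alpha(y),[z,x]]+[\alpha(z),[x,y]]=0$. A Hom-post-Lie algebra $(L,[\cdot,\cdot],\cdot,\alpha)$ is a Hom-Lie algebra with bilinear $\cdot$ such that $\alpha(z)\cdot[x,y]-[z\cdot x,\alpha(y)]-[\alpha(x),z\cdot y]=0$ and $\alpha(z)\cdot(y\cdot x)-\alpha(y)\cdot(z\cdot x)+(y\cdot z)\cdot\alpha(x)-(z\cdot y)\cdot\alpha(x)+[y,z]\cdot\alpha(x)=0$ for all $x,y,z$; it is multiplicative if $\alpha([x,y])=[\alpha(x),\alpha(y)]$ and $\alpha(x\cdot y)=\alpha(x)\cdot\alpha(y)$. A module over $L$ is a vector space $M$ with linear $\alpha_M$ and bilinear $\diamond,\bullet:L\otimes M\to M$ such that for all $x,y\in L,m\in M$: (i) $\alpha_M(x\diamond m)=\alpha(x)\diamond\alpha_M(m)$,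 $\alpha_M(x\bullet m)=\alpha(x)\bullet\alpha_M(m)$; (ii) $[x,y]\diamond\alpha_M(m)=\alpha(x)\diamond(y\diamond m)-\alpha(y)\diamond(x\diamond m)$; (iii) $(x\cdot y)\diamond\alpha_M(m)=\alpha(x)\bullet(y\diamond m)-\alpha(y)\diamond(x\bullet m)$; (iv) $[x,y]\bullet\alpha_M(m)=\alpha(x)\bullet(y\bullet m)-\alpha(y)\bullet(x\bullet m)-(x\cdot y)\bullet\alpha_M(m)+(y\cdot x)\bullet\alpha_M(m)$. *)

From mathcomp Require Import all_boot all_algebra.
Set Implicit Arguments. Unset Strict Implicit. Unset Printing Implicit Defensive.
Import GRing.Theory.
Local Open Scope ring_scope.

Section Defs.
Variable K : fieldType.

Definition lin_map (U V : lmodType K) (f : U -> V) : Prop :=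
  forall (a : K) (x y : U), f (a *: x + y) = a *: f x + f y.

Definition bilin_map (U V W : lmodType K) (f : U -> V -> W) : Prop :=
  (forall (a : K) (x y : U) (z : V), f (a *: x + y) z = a *: f x z + f y z) /\
  (forall (a : K) (x : U) (y z : V), f x (a *: y + z) = a *: f x y + f x z).

Variable L : lmodType K.

Definition HomLie (br : L -> L -> L) (alpha : L -> L) : Prop :=
  [/\ bilin_map br,
      (forall x y, br x y = - br y x),
      lin_map alpha &
      (forall x y z,
         br (alpha x) (br y z) + br (alpha y) (br z x) + br (alpha z) (br x y) = 0)].

Definition HomPostLie (br dot : L -> L -> L) (alpha : L -> L) : Prop :=
  [/\ HomLie br alpha,
      bilin_map dot,
      (forall x y z,
         dot (alpha z) (br x y) - br (dot z x) (alpha y) - br (alpha x) (dot z y) = 0) &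
      (forall x y z,
         dot (alpha z) (dot y x) - dot (alpha y) (dot z x)
         + dot (dot y z) (alpha x) - dot (dot z y) (alpha x)
         + dot (br y z) (alpha x) = 0)].

Definition HomPostLie_multiplicative (br dot : L -> L -> L) (alpha : L -> L) : Prop :=
  (forall x y, alpha (br x y) = br (alpha x) (alpha y)) /\
  (forall x y, alpha (dot x y) = dot (alpha x) (alpha y)).

Definition HomPostLieModule (br dot : L -> L -> L) (alpha : L -> L)
  (M : lmodType K) (alphaM : M -> M) (dia bul : L -> M -> M) : Prop :=
  lin_map alphaM /\ bilin_map dia /\ bilin_map bul /\
  ((forall x m, alphaM (dia x m) = dia (alpha x) (alphaM m)) /\
   (forall x m, alphaM (bul x m) = bul (alpha x) (alphaM m))) /\
  (forall x y m,
     dia (br x y) (alphaM m) = dia (alpha x) (dia y m) - dia (alpha y) (dia x m)) /\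
  (forall x y m,
     dia (dot x y) (alphaM m) = bul (alpha x) (dia y m) - dia (alpha y) (bul x m)) /\
      (forall x y m,
         bul (br x y) (alphaM m) = bul (alpha x) (bul y m) - bul (alpha y) (bul x m)
                                   - bul (dot x y) (alphaM m) + bul (dot y x) (alphaM m)).
End Defs.

From mathcomp Require Import all_boot all_algebra.
Import GRing.Theory.
Local Open Scope ring_scope.

(* Any linear map g on L that commutes with alpha and preserves both products
   can be inserted in the L-argument of the two actions: each module axiom for
   (dia \o g, bul \o g) is the old axiom at the arguments g x, g y. For
   g = alpha^n these hypotheses follow from linearity and multiplicativity. *)

Lemma iter_morph2 (T : Type) (f : T -> T) (op : T -> T -> T) (n : nat) :
  {morph f : x y / op x y} -> {morph iter n f : x y / op x y}.
Proof. by move=> fM x y; elim: n => //= n ->; rewrite fM. Qed.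

Lemma iter_morph1 (T : Type) (f op : T -> T) (n : nat) :
  {morph f : x / op x} -> {morph iter n f : x / op x}.
Proof. by move=> fM x; elim: n => //= n ->; rewrite fM. Qed.

Section PrecomposedActions.
Variable K : fieldType.

Lemma lin_map_iter (V : lmodType K) (f : V -> V) (n : nat) :
  lin_map f -> lin_map (iter n f).
Proof. by move=> f_lin a x y; elim: n => //= n ->; apply: f_lin. Qed.

Lemma bilin_map_precomp (U U' V W : lmodType K) (f : U -> V -> W) (g : U' -> U) :
  lin_map g -> bilin_map f -> bilin_map (fun x => f (g x)).
Proof.
move=> g_lin [f_linl f_linr]; split=> a x y *; last exact: f_linr.
by rewrite g_lin f_linl.
Qed.

Variables (L : lmodType K) (br dot : L -> L -> L) (alpha : L -> L).
Variables (M : lmodType K) (alphaM : M -> M) (dia bul : L -> M -> M).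

Lemma HomPostLieModule_precomp (g : L -> L) :
  lin_map g -> {morph g : x / alpha x} ->
  {morph g : x y / br x y} -> {morph g : x y / dot x y} ->
  HomPostLieModule br dot alpha alphaM dia bul ->
  HomPostLieModule br dot alpha alphaM
    (fun x m => dia (g x) m) (fun x m => bul (g x) m).
Proof.
move=> g_lin g_alpha g_br g_dot
  [alphaM_lin [dia_bilin [bul_bilin [[dia_alpha bul_alpha] [ii [iii iv]]]]]].
split=> //; split; first exact: bilin_map_precomp.
split; first exact: bilin_map_precomp.
split; first by split=> x m; rewrite (dia_alpha, bul_alpha) g_alpha.
split; first by move=> x y m; rewrite g_br ii !g_alpha.
split; first by move=> x y m; rewrite g_dot iii !g_alpha.
by move=> x y m; rewrite g_br !g_dot iv !g_alpha.
Qed.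

End PrecomposedActions.

Theorem mainTheorem5 (K : fieldType) (hchar : (2%:R : K) != 0)
  (L : lmodType K) (br dot : L -> L -> L) (alpha : L -> L)
  (M : lmodType K) (alphaM : M -> M) (dia bul : L -> M -> M) (n : nat) :
  HomPostLie br dot alpha ->
  HomPostLie_multiplicative br dot alpha ->
  HomPostLieModule br dot alpha alphaM dia bul ->
  HomPostLieModule br dot alpha alphaM
    (fun x m => dia (iter n alpha x) m) (fun x m => bul (iter n alpha x) m).
Proof.
move=> [[_ _ alpha_lin _] _ _ _] [alpha_br alpha_dot].
apply: HomPostLieModule_precomp.
- exact: lin_map_iter.
- exact: iter_morph1.
- exact: iter_morph2.
- exact: iter_morph2.
Qed.
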